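(* Let $n\ge 2$, $\sigma=(1,2,\dots,n-1)\in S_n$, and $\rho\in S_n$ defined by $\rho(n-1)=n$, $\rho(n)=n-1$, $\rho(k)=n-1-k$ for $1\le k\le n-2$. Suppose $\tau\in S_n$ has order $2$, $\tau(n)=n-1$, and $\tau\sigma^k\tau=\sigma^{\tau(k)}\tau\sigma^{\tau\rho\tau(k)}$ for all $k\in\{1,\dots,n-2\}$. Then for every $a\in\{1,\dots,n-1\}$ with $\gcd(a,n-1)=1$, the permutation $m_a\tau m_a^{-1}$ also has order $2$, sends $n$ to $n-1$, and satisfies $(m_a\tau m_a^{-1})\sigma^k(m_a\tau m_a^{-1})=\sigma^{\tau'(k)}\tau'\sigma^{\tau'\rho\tau'(k)}$ for all $k\in\{1,\dots,n-2\}$, where $\tau'=m_a\tau m_a^{-1}$.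
   Context: $S_n$ is the symmetric group on $\{1,\dots,n\}$ with product given by composition (rightmost applied first). Identify $\{1,\dots,n-1\}$ with $\mathbb{Z}/(n-1)\mathbb{Z}$ via $k\mapsto k \bmod (n-1)$ (so $n-1$ corresponds to $0$), and hence $\{1,\dots,n\}$ with $\mathbb{Z}/(n-1)\mathbb{Z}\cup\{n\}$. For $a$ coprime to $n-1$, $m_a\in S_n$ is multiplication by $a$ on $\mathbb{Z}/(n-1)\mathbb{Z}$, extended by $m_a(n)=n$. *)

From mathcomp Require Import all_boot all_fingroup.
From mathcomp Require Import zify.
Set Implicit Arguments. Unset Strict Implicit. Unset Printing Implicit Defensive.

(* Encoding: S_n is {perm 'I_n}; the point k of {1,...,n} is the ordinal
   with value k-1.  [lab i] is the label in {1,...,n} of i : 'I_n. *)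
Definition lab {n} (i : 'I_n) : nat := i.+1.

(* Composition in the paper's convention: (circ s t) x = s (t x)
   ("rightmost applied first").  MathComp's s * t applies s first. *)
Definition circ {n} (s t : {perm 'I_n}) : {perm 'I_n} := (t * s)%g.

Lemma circE n (s t : {perm 'I_n}) x : circ s t x = s (t x).
Proof. by rewrite /circ permM. Qed.

Definition perm_of {n} (f : 'I_n -> 'I_n) : {perm 'I_n} :=
  match injectiveP f with ReflectT h => perm h | ReflectF _ => 1%g end.

Lemma perm_ofE n (f : 'I_n -> 'I_n) : injective f -> perm_of f =1 f.
Proof.
move=> inj x; rewrite /perm_of; case: injectiveP => [h|[]//].
by rewrite permE.
Qed.

(* sigma = (1 2 ... n-1): label k |-> k+1 (k <= n-2), n-1 |-> 1, n |-> n. *)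
Definition sigma_fun {n} (i : 'I_n) : 'I_n :=
  insubd i (if i < n.-1 then i.+1 %% n.-1 else val i).
Definition sigma n : {perm 'I_n} := perm_of (@sigma_fun n).

(* rho: label k |-> n-1-k (1 <= k <= n-2), n-1 |-> n, n |-> n-1. *)
Definition rho_fun {n} (i : 'I_n) : 'I_n :=
  insubd i (if i < n.-2 then n - 3 - i else if val i == n.-2 then n.-1 else n.-2).
Definition rho n : {perm 'I_n} := perm_of (@rho_fun n).

(* m_a: multiplication by a on Z/(n-1) (labels 1..n-1, with n-1 ~ 0), n |-> n.
   Label k |-> the label in {1..n-1} congruent to a*k mod n-1, whose index is
   (a*k + (n-2)) mod (n-1). *)
Definition mult_fun {n} (a : nat) (i : 'I_n) : 'I_n :=
  insubd i (if i < n.-1 then (a * i.+1 + n.-2) %% n.-1 else val i).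
Definition mult n (a : nat) : {perm 'I_n} := perm_of (@mult_fun n a).

Lemma val_insubd n (i : 'I_n) k : k < n -> val (insubd i k) = k.
Proof. by move=> h; rewrite insubdK. Qed.

Lemma sigma_fun_inj n : injective (@sigma_fun n).
Proof.
move=> i j; rewrite /sigma_fun => /(congr1 val).
have ltn := ltn_ord i; have ltj := ltn_ord j.
rewrite !val_insubd; last 2 first.
- case: ifP => h //; apply: leq_trans (ltn_pmod _ _) _; lia.
- case: ifP => h //; apply: leq_trans (ltn_pmod _ _) _; lia.
move=> e; apply: val_inj => /=.
have mS k : k < n.-1 -> k.+1 %% n.-1 = if k.+1 == n.-1 then 0 else k.+1.
  move=> h; case: eqP => [->|ne]; first by rewrite modnn.
  by rewrite modn_small //; lia.
move: e; case: (ltnP i n.-1) => hi; case: (ltnP j n.-1) => hj //;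
  rewrite ?mS //; repeat case: eqP; move=> /= *; lia.
Qed.

Lemma rho_fun_inj n : injective (@rho_fun n).
Proof.
move=> i j; rewrite /rho_fun => /(congr1 val).
have ltn := ltn_ord i; have ltj := ltn_ord j.
rewrite !val_insubd; last 2 first.
- by repeat case: ifP; move=> /= *; lia.
- by repeat case: ifP; move=> /= *; lia.
by move=> e; apply: val_inj; move: e; repeat case: ifP; move=> /= *; lia.
Qed.

Lemma mult_fun_inj n a : coprime a n.-1 -> injective (@mult_fun n a).
Proof.
move=> co i j; rewrite /mult_fun => /(congr1 val).
have ltn := ltn_ord i; have ltj := ltn_ord j.
have md k : 0 < n.-1 -> k %% n.-1 < n.
  by move=> p; apply: leq_trans (ltn_pmod _ p) _; lia.
rewrite !val_insubd; last 2 first.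
- by case: ifP => h //; apply: md; lia.
- by case: ifP => h //; apply: md; lia.
move=> e; apply: val_inj; move: e => /=.
have key x y : y <= x -> x < n.-1 ->
    a * x.+1 + n.-2 = a * y.+1 + n.-2 %[mod n.-1] -> x = y.
  move=> yx xn /eqP; rewrite eqn_modDr eqn_mod_dvd ?leq_mul2l ?ltnS ?yx ?orbT //.
  rewrite -mulnBr Gauss_dvdr; last by rewrite coprime_sym.
  rewrite subSS => d; have : x - y = 0 \/ 0 < x - y by lia.
  by case=> [|p]; [lia | have := dvdn_leq p d; lia].
case: (ltnP i n.-1) => hi; case: (ltnP j n.-1) => hj //=.
- move=> e; case: (leqP j i) => ji.
  + by apply: key.
  + by apply/esym/key; [lia | | ].
- move=> e; have := @ltn_pmod (a * i.+1 + n.-2) n.-1 ltac:(lia).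
  by rewrite e /=; lia.
- move=> e; have := @ltn_pmod (a * j.+1 + n.-2) n.-1 ltac:(lia).
  by rewrite -e /=; lia.
Qed.

Lemma sigmaE n : sigma n =1 @sigma_fun n.
Proof. exact: perm_ofE (@sigma_fun_inj n). Qed.
Lemma rhoE n : rho n =1 @rho_fun n.
Proof. exact: perm_ofE (@rho_fun_inj n). Qed.
Lemma multE n a : coprime a n.-1 -> mult n a =1 @mult_fun n a.
Proof. by move=> co; apply: perm_ofE; apply: mult_fun_inj. Qed.

From Pilot Require Import Defs.
From mathcomp Require Import all_boot all_fingroup zify.

Set Implicit Arguments.
Unset Strict Implicit.
Unset Printing Implicit Defensive.

(* On the labels 1..n-1, read modulo n-1, sigma is translation by 1 and m_a
   is multiplication by a; both fix n, and m_a also fixes n-1 = 0.  The map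
   rho is negation on 1..n-2 and swaps n-1 and n.  Hence m_a sigma^k m_a^-1
   = sigma^(a k) and m_a commutes with rho, so conjugating the relation of
   tau at k by m_a yields the relation of tau' at a k; conjugation also
   preserves the order and the value at n. *)

Section Cyclic.

Variable n : nat.

Lemma sigmaX_val k (z : 'I_n) :
  val ((sigma n ^+ k)%g z) = if z < n.-1 then (z + k) %% n.-1 else z.
Proof.
elim: k => [|k IH].
  by rewrite expg0 perm1 addn0; case: ifP => // h; rewrite modn_small.
have sigma_val (y : 'I_n) :
    val (sigma n y) = if y < n.-1 then y.+1 %% n.-1 else y.
  rewrite sigmaE /sigma_fun insubdK //; have := ltn_ord y.
  by case: ifP => // h _; apply: leq_trans (ltn_pmod _ _) _; lia.
rewrite expgSr permM sigma_val IH.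
case: (ltnP z n.-1) => h; last by rewrite ltnNge h.
have -> : (z + k) %% n.-1 < n.-1 by apply: ltn_pmod; lia.
by rewrite -addn1 modnDml addn1 addnS.
Qed.

Lemma sigmaX_ltn_pred k (z : 'I_n) : z < n.-1 -> (sigma n ^+ k)%g z < n.-1.
Proof. by move=> hz; rewrite sigmaX_val hz ltn_pmod //; lia. Qed.

Lemma sigmaX_fix k (z : 'I_n) : n.-1 <= z -> (sigma n ^+ k)%g z = z.
Proof. by move=> hz; apply: val_inj; rewrite sigmaX_val ltnNge hz. Qed.

Lemma sigmaX_lab k (z : 'I_n) : z < n.-1 ->
  lab ((sigma n ^+ k)%g z) = lab z + k %[mod n.-1].
Proof.
by move=> hz; rewrite /lab sigmaX_val hz -addn1 modnDml addn1 addSn.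
Qed.

Lemma sigmaX_eqmod x y :
  x = y %[mod n.-1] -> (sigma n ^+ x)%g = (sigma n ^+ y)%g.
Proof.
move=> e; apply/permP => z; apply: val_inj; rewrite !sigmaX_val.
by case: ifP => // _; rewrite -modnDmr e modnDmr.
Qed.

Lemma lab_eqmod_inj (z w : 'I_n) : z < n.-1 -> w < n.-1 ->
  lab z = lab w %[mod n.-1] -> z = w.
Proof.
move=> hz hw; rewrite /lab -[z.+1]addn1 -[w.+1]addn1 => /eqP.
by rewrite eqn_modDr !modn_small // => /eqP /val_inj.
Qed.

Lemma rho_val (z : 'I_n) : val (rho n z) =
  if z < n.-2 then n - 3 - z else if val z == n.-2 then n.-1 else n.-2.
Proof.
rewrite rhoE /rho_fun insubdK //.
by have := ltn_ord z; repeat case: ifP; move=> /= *; lia.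
Qed.

Lemma rho_ltn_pred2 (z : 'I_n) : z < n.-2 -> rho n z < n.-2.
Proof. by move=> hz; rewrite rho_val hz; lia. Qed.

Lemma rho_lab (z : 'I_n) : z < n.-2 -> lab (rho n z) + lab z = n.-1.
Proof. by move=> hz; rewrite /lab rho_val hz; lia. Qed.

Lemma rho_geq_pred2 (z : 'I_n) : n.-2 <= z -> n.-2 <= rho n z.
Proof. by move=> hz; rewrite rho_val ltnNge hz /=; case: eqP; lia. Qed.

Lemma rho_neq_penult (z : 'I_n) : z < n.-1 -> (rho n z : nat) != n.-2.
Proof. by move=> hz; rewrite rho_val; repeat case: ifP; move=> /= *; lia. Qed.

End Cyclic.

Section Multiplication.

Variables (n a : nat).
Hypothesis n_ge2 : 2 <= n.
Hypothesis a_coprime : coprime a n.-1.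

Local Notation m := (mult n a).

Lemma mult_val (z : 'I_n) :
  val (m z) = if z < n.-1 then (a * z.+1 + n.-2) %% n.-1 else z.
Proof.
rewrite (Defs.multE a_coprime) /mult_fun insubdK //; have := ltn_ord z.
by case: ifP => // h _; apply: leq_trans (ltn_pmod _ _) _; lia.
Qed.

Lemma mult_fix (z : 'I_n) : n.-2 <= z -> m z = z.
Proof.
move=> hz; apply: val_inj; rewrite mult_val.
case: ifP => // hz1; have -> : z.+1 = n.-1 by lia.
by rewrite modnMDl modn_small /=; lia.
Qed.

Lemma mult_ltn_pred2 (z : 'I_n) : (m z < n.-2) = (z < n.-2).
Proof.
case: (ltnP z n.-2) => hz; last by rewrite mult_fix // ltnNge hz.
have hp : n.-2 < n by lia.
have m_ne : (m z : nat) != n.-2.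
  apply/eqP => e; have : m z = m (Ordinal hp).
    by apply: val_inj => /=; rewrite e mult_fix.
  by move/perm_inj/(congr1 val) => /=; lia.
have : (m z : nat) < n.-1 by rewrite mult_val ifT ?ltn_pmod //; lia.
by lia.
Qed.

Lemma mult_lab (w : 'I_n) : w < n.-1 -> lab (m w) = a * lab w %[mod n.-1].
Proof.
move=> hw; rewrite /lab mult_val hw -addn1 modnDml -addnA addn1.
by rewrite (_ : (n.-2).+1 = n.-1) ?modnDr //; lia.
Qed.

Lemma mult_ltn_pred (w : 'I_n) : w < n.-1 -> m w < n.-1.
Proof. by move=> hw; rewrite mult_val hw ltn_pmod //; lia. Qed.

Lemma mult_sigmaX k (z : 'I_n) :
  m ((sigma n ^+ k)%g z) = (sigma n ^+ (a * k))%g (m z).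
Proof.
case: (ltnP z n.-1) => hz; last by rewrite !sigmaX_fix ?mult_fix //; lia.
apply: lab_eqmod_inj.
- exact/mult_ltn_pred/sigmaX_ltn_pred.
- exact/sigmaX_ltn_pred/mult_ltn_pred.
rewrite mult_lab ?sigmaX_ltn_pred // sigmaX_lab ?mult_ltn_pred //.
by rewrite -modnMmr sigmaX_lab // modnMmr -modnDml mult_lab // modnDml mulnDr.
Qed.

Lemma mult_rho (z : 'I_n) : m (rho n z) = rho n (m z).
Proof.
case: (ltnP z n.-2) => hz; last by rewrite !mult_fix ?rho_geq_pred2.
have hmz : m z < n.-2 by rewrite mult_ltn_pred2.
have hrz := rho_ltn_pred2 hz; have hrmz := rho_ltn_pred2 hmz.
apply: lab_eqmod_inj; rewrite ?mult_ltn_pred //; try lia.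
apply/eqP; rewrite -(eqn_modDr (lab (m z))) rho_lab //.
rewrite -modnDm !mult_lab //; try lia.
by rewrite modnDm -mulnDr rho_lab // modnMl modnn.
Qed.

Lemma sigmaX_conj_mult k : ((sigma n ^+ k) ^ m)%g = (sigma n ^+ (a * k))%g.
Proof. by apply/permP => z; rewrite -(permKV m z) permJ mult_sigmaX. Qed.

Lemma sigma_lab_mult (w : 'I_n) : w < n.-1 ->
  (sigma n ^+ lab (m w))%g = ((sigma n ^+ lab w) ^ m)%g.
Proof. by move=> hw; rewrite sigmaX_conj_mult; apply/sigmaX_eqmod/mult_lab. Qed.

End Multiplication.

Lemma perm_order2K (T : finType) (s : {perm T}) : #[s]%g = 2 -> involutive s.
Proof.
move=> o2 z; have : (s ^+ 2)%g = 1%g by rewrite -o2 expg_order.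
by move/permP/(_ z); rewrite expgS expg1 permM perm1.
Qed.

Lemma involution_ltn_pred n (tau : {perm 'I_n}) :
  involutive tau -> (forall i : 'I_n, lab i = n -> lab (tau i) = n.-1) ->
  forall z : 'I_n, (z : nat) != n.-2 -> tau z < n.-1.
Proof.
move=> tauK tau_last z hz; rewrite ltnNge; apply/negP => le.
have := tau_last (tau z); rewrite tauK /lab; have := ltn_ord (tau z); lia.
Qed.

Lemma circ_conjg n (s t u : {perm 'I_n}) :
  circ (s ^ u)%g (t ^ u)%g = ((circ s t) ^ u)%g.
Proof. by rewrite /circ conjMg. Qed.

Theorem proposition10 (n : nat) (tau : {perm 'I_n}) :
  2 <= n ->
  #[tau]%g = 2 ->
  (forall i : 'I_n, lab i = n -> lab (tau i) = n.-1) ->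
  (forall i : 'I_n, 1 <= lab i <= n - 2 ->
     circ (circ tau (sigma n ^+ lab i)%g) tau =
     circ (circ (sigma n ^+ lab (tau i))%g tau)
          (sigma n ^+ lab (tau (rho n (tau i))))%g) ->
  forall a : nat, 1 <= a <= n - 1 -> coprime a (n - 1) ->
  let tau' := circ (circ (mult n a) tau) (mult n a)^-1%g in
  [/\ #[tau']%g = 2,
      (forall i : 'I_n, lab i = n -> lab (tau' i) = n.-1) &
      (forall i : 'I_n, 1 <= lab i <= n - 2 ->
         circ (circ tau' (sigma n ^+ lab i)%g) tau' =
         circ (circ (sigma n ^+ lab (tau' i))%g tau')
              (sigma n ^+ lab (tau' (rho n (tau' i))))%g)].
Proof.
move=> n_ge2 tau_order tau_last tau_rel a _ a_coprime tau'.
have co : coprime a n.-1 by rewrite -subn1.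
set m := mult n a.
have tau'E : tau' = (tau ^ m)%g by rewrite /tau' /circ /conjg mulgA.
have tau'_m z : tau' (m z) = m (tau z) by rewrite tau'E permJ.
have tau_ltn_pred := involution_ltn_pred (perm_order2K tau_order) tau_last.
split=> [|i|i].
- by rewrite tau'E orderJ.
- rewrite /lab => hi; rewrite -(mult_fix n_ge2 co (_ : n.-2 <= i)); last by lia.
  rewrite tau'_m mult_fix //; have := tau_last i hi; rewrite /lab; lia.
- rewrite /lab -(permKV m i); set j := (m^-1)%g i => hi.
  have hj : j < n.-2 by rewrite -(mult_ltn_pred2 n_ge2 co) -/m; lia.
  have lt_tj : tau j < n.-1 by apply: tau_ltn_pred; lia.
  have lt_trtj := tau_ltn_pred _ (rho_neq_penult lt_tj).
  rewrite !tau'_m -mult_rho // tau'_m.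
  rewrite !sigma_lab_mult //; last by lia.
  by rewrite tau'E !circ_conjg tau_rel /lab //; lia.
Qed.
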